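(* Let $t\ge 1$, $n\ge 1$, $q\ge 1$ be integers and $u=\lfloor(\frac{t}{2}+1)^2\rfloor$. An $(n,q)$ code $\mathcal{C}$ is a $t$-MIPPC$(n,q)$ if and only if there is no minimal forbidden configuration in $\mathcal{C}$ of size at most $u$.
   Context: Let $Q$ be an alphabet with $|Q|=q$; an $(n,q)$ code is a subset $\mathcal{C}\subseteq Q^n$. For $\mathcal{S}\subseteq Q^n$ and $1\le i\le n$ let $\mathcal{S}(i)=\{\mathbf{c}(i):\mathbf{c}\in\mathcal{S}\}$ and $\mathrm{desc}(\mathcal{S})=\mathcal{S}(1)\times\cdots\times\mathcal{S}(n)$. $\mathcal{C}$ is a $t$-MIPPC$(n,q)$ if for every nonempty $\mathcal{C}'\subseteq\mathcal{C}$ with $|\mathcal{C}'|\le t$, $\bigcap_{\mathcal{S}\in S_t(\mathcal{C}')}\mathcal{S}\neq\emptyset$, where $S_t(\mathcal{C}')=\{\mathcal{S}\subseteq\mathcal{C}:|\mathcal{S}|\le t,\ \mathrm{desc}(\mathcal{S})=\mathrm{desc}(\mathcal{C}')\}$. A configuration in $\mathcal{C}$ is a collection $\mathcal{F}=\{\mathcal{F}_1,\dots,\mathcal{F}_m\}$ of nonempty subsets $\mathcal{F}_i\subseteq\mathcal{C}$ with $|\mathcal{F}_i|\le t$ and $\bigcap_i\mathcal{F}_i=\emptyset$; it is minimal if $\bigcap_{j\neq i}\mathcal{F}_j\neq\emptyset$ for all $i$; its size is $|\bigcup_i\mathcal{F}_i|$. A (minimal) forbidden configuration in $\mathcal{C}$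 is a (minimal) configuration with $\mathrm{desc}(\mathcal{F}_1)=\cdots=\mathrm{desc}(\mathcal{F}_m)$, i.e. $\mathcal{F}_1(i)=\cdots=\mathcal{F}_m(i)$ for every $1\le i\le n$. *)

From mathcomp Require Import all_boot.
Set Implicit Arguments. Unset Strict Implicit. Unset Printing Implicit Defensive.

Section Codes.
Variables (Q : finType) (n : nat).

Local Notation word := {ffun 'I_n -> Q}.

Definition coord (S : {set word}) (i : 'I_n) : {set Q} := [set (c : word) i | c in S].

Definition desc (S : {set word}) : {set word} :=
  [set w : word | [forall i, w i \in coord S i]].

Definition St (t : nat) (C C' : {set word}) : {set {set word}} :=
  [set S : {set word} | [&& S \subset C, #|S| <= t & desc S == desc C']].

Definition is_MIPPC (t : nat) (C : {set word}) : Prop :=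
  forall C' : {set word}, C' \subset C -> 0 < #|C'| -> #|C'| <= t ->
    \bigcap_(S in St t C C') S != set0.

Definition configuration (t : nat) (C : {set word}) (F : {set {set word}}) : Prop :=
  (forall Fi, Fi \in F -> [/\ Fi != set0, Fi \subset C & #|Fi| <= t]) /\
  \bigcap_(G in F) G = set0.

Definition minimal_configuration t C F : Prop :=
  configuration t C F /\
  forall Fi, Fi \in F -> \bigcap_(G in F :\ Fi) G != set0.

Definition config_size (F : {set {set word}}) : nat := #|\bigcup_(G in F) G|.

Definition forbidden (F : {set {set word}}) : Prop :=
  forall G H, G \in F -> H \in F -> desc G = desc H.

Definition minimal_forbidden_configuration t C F : Prop :=
  minimal_configuration t C F /\ forbidden F.

End Codes.

From mathcomp Require Import all_boot.
From mathcomp Require Import zify.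

Set Implicit Arguments.
Unset Strict Implicit.
Unset Printing Implicit Defensive.

(* If C is not a t-MIPPC, some coalition C' has a family S_t(C') with empty
   intersection, and an inclusion-minimal subfamily with empty intersection is
   a minimal forbidden configuration.  Conversely, every member of a forbidden
   configuration lies in S_t of any other member, so the empty intersection
   violates the MIPPC property.  Finally a minimal configuration F_1, ..., F_m
   is small: minimality provides points x_i lying in every F_j except F_i;
   these are distinct and each F_j contains m - 1 of them, so the union has at
   most m + m (t - m + 1) = m (t + 2 - m) <= (t + 2)^2 / 4 elements. *)

Lemma leq_card_bigcup (T I : finType) (P : {set I}) (A : I -> {set T}) :
  #|\bigcup_(i in P) A i| <= \sum_(i in P) #|A i|.
Proof.
apply: (big_ind2 (fun (U : {set T}) s => #|U| <= s)) => [|U1 s1 U2 s2 ? ?|//].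
  by rewrite cards0.
by apply: leq_trans (leq_card_setU _ _) _; apply: leq_add.
Qed.

Lemma leq_minimal_cover_bound m t :
  m.-1 <= t -> m + m * (t - m.-1) <= (t + 2) ^ 2 %/ 4.
Proof.
case: m => [//|m] /= le_mt; rewrite leq_divRL // -mulnS.
have -> : (t - m).+1 = t + 2 - m.+1 by lia.
rewrite mulnC {2}(_ : t + 2 = m.+1 + (t + 2 - m.+1)); last by lia.
exact: (nat_AGM2 _ _).1.
Qed.

Section MinimalFamily.
Variables (T : finType) (F : {set {set T}}).
Hypothesis capF : \bigcap_(G in F) G = set0.
Hypothesis minF : forall G, G \in F -> \bigcap_(H in F :\ G) H != set0.

Lemma minimal_family_transversal :
  exists2 X : {set T}, #|X| = #|F| & {in F, forall G, #|F|.-1 <= #|G :&: X|}.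
Proof.
have [->|[G0 G0F]] := set_0Vmem F; first by exists set0; rewrite ?cards0.
have /set0Pn [w0 _] := minF G0F.
pose x G := odflt w0 [pick w in \bigcap_(H in F :\ G) H].
have x_in_others G H : G \in F -> H \in F -> H != G -> x G \in H.
  move=> GF HF HG; rewrite /x; case: pickP => [w /bigcapP-> //|/= none].
    by rewrite !inE HG.
  by have /set0Pn [w] := minF GF; rewrite none.
have x_notin G : G \in F -> x G \notin G.
  move=> GF; apply: contraPN capF => xG /setP /(_ (x G)).
  rewrite inE => /bigcapP; apply=> H HF.
  by have [-> //|HG] := eqVneq H G; apply: x_in_others.
have x_inj : {in F &, injective x}.
  move=> G H GF HF xGH; apply: contraTeq (x_notin H HF) => GH.
  by rewrite negbK -xGH x_in_others // eq_sym.
exists (x @: F); first by rewrite card_in_imset.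
move=> G GF; have <- : #|x @: (F :\ G)| = #|F|.-1.
  rewrite card_in_imset ?(cardsD1 G F) ?GF //.
  by move=> H K /setD1P[_ HF] /setD1P[_ KF]; apply: x_inj.
apply/subset_leq_card/subsetP => _ /imsetP[H /setD1P[HG HF] ->].
by rewrite inE x_in_others 1?eq_sym // imset_f.
Qed.

Variable t : nat.
Hypothesis card_memF : forall G, G \in F -> #|G| <= t.

Lemma leq_card_cover_minimal_family :
  #|\bigcup_(G in F) G| <= (t + 2) ^ 2 %/ 4.
Proof.
have [X cardX meetX] := minimal_family_transversal.
have [F0|[G0 G0F]] := set_0Vmem F; first by rewrite F0 big_set0 cards0.
have le_mt : #|F|.-1 <= t.
  apply: leq_trans (meetX _ G0F) (leq_trans _ (card_memF G0F)).
  exact/subset_leq_card/subsetIl.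
have card_diff G : G \in F -> #|G :\: X| <= t - #|F|.-1.
  by move=> GF; rewrite cardsD leq_sub ?card_memF ?meetX.
have cover_sub : \bigcup_(G in F) G \subset X :|: \bigcup_(G in F) (G :\: X).
  apply/subsetP => w /bigcupP[G GF wG]; rewrite in_setU.
  case: (boolP (w \in X)) => //= wX.
  by apply/bigcupP; exists G; rewrite // inE wX.
apply: leq_trans (subset_leq_card cover_sub) _.
apply: leq_trans (leq_card_setU _ _) _; rewrite cardX.
apply: leq_trans _ (leq_minimal_cover_bound le_mt); rewrite leq_add2l.
apply: leq_trans (leq_card_bigcup _ _) _.
by rewrite -sum_nat_const leq_sum.
Qed.

End MinimalFamily.

Section Codes.
Variables (Q : finType) (n t : nat) (C : {set {ffun 'I_n -> Q}}).
Local Notation word := {ffun 'I_n -> Q}.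

Lemma leq_config_size_minimal F :
  minimal_configuration t C F -> config_size F <= (t + 2) ^ 2 %/ 4.
Proof.
move=> [[memF capF] minF]; apply: leq_card_cover_minimal_family => // G GF.
by have [] := memF G GF.
Qed.

Lemma forbidden_configuration_not_MIPPC (w : word) F :
  configuration t C F -> forbidden F -> ~ is_MIPPC t C.
Proof.
move=> [memF capF] forbF MC.
have [F0|[G GF]] := set_0Vmem F.
  by move: capF; rewrite F0 big_set0 => /setP /(_ w); rewrite !inE.
have [G0 GC Gt] := memF G GF.
have /set0Pn [v /bigcapP v_St] := MC G GC (etrans (card_gt0 G) G0) Gt.
have /setP /(_ v) := capF; rewrite inE => /bigcapP; apply=> H HF.
have [_ HC Ht] := memF H HF.
by apply: v_St; rewrite inE HC Ht (forbF H G HF GF) eqxx.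
Qed.

Lemma mem_desc (S : {set word}) c : c \in S -> c \in desc S.
Proof. by move=> cS; rewrite inE; apply/forallP => i; apply: imset_f. Qed.

Lemma desc0 : 0 < n -> desc (set0 : {set word}) = set0.
Proof.
move=> n_gt0; apply/setP => w; rewrite !inE.
apply/negbTE/negP => /forallP /(_ (Ordinal n_gt0)).
by rewrite /coord imset0 inE.
Qed.

Lemma St_cap0_minimal_forbidden (C' : {set word}) :
  0 < n -> C' != set0 -> \bigcap_(S in St t C C') S = set0 ->
  exists F, minimal_forbidden_configuration t C F.
Proof.
move=> n_gt0 /set0Pn [c cC'] capSt.
pose P (F : {set {set word}}) :=
  (F \subset St t C C') && (\bigcap_(S in F) S == set0).
have PSt : P (St t C C') by rewrite /P subxx capSt eqxx.
have [F /minsetP [/andP [FSt /eqP capF] minF] _] := minset_exists PSt.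
have memF G : G \in F -> [/\ G \subset C, #|G| <= t & desc G = desc C'].
  by move=> /(subsetP FSt); rewrite inE => /and3P [-> -> /eqP].
exists F; split; last by move=> G H /memF [_ _ ->] /memF [_ _ ->].
split; first split => //.
  move=> G /memF [GC Gt descG]; split=> //.
  apply: contraTneq (mem_desc cC') => G0.
  by rewrite -descG G0 desc0 ?inE.
move=> G GF; apply/negP => /eqP capFG.
have P_FG : P (F :\ G).
  by rewrite /P capFG eqxx andbT (subset_trans _ FSt) ?subsetDl.
by have /setP /(_ G) := minF _ P_FG (subsetDl F _); rewrite !inE eqxx GF.
Qed.

End Codes.

(* u = floor((t/2 + 1)^2) = (t + 2)^2 %/ 4 *)
Theorem corollary4 (t n q : nat) (Q : finType) (C : {set {ffun 'I_n -> Q}}) :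
  1 <= t -> 1 <= n -> 1 <= q -> #|Q| = q ->
  is_MIPPC t C <->
  ~ (exists F : {set {set {ffun 'I_n -> Q}}},
        minimal_forbidden_configuration t C F /\
        config_size F <= (t + 2) ^ 2 %/ 4).
Proof.
move=> _ n_gt0 q_gt0 cardQ.
have /card_gt0P [a _] : 0 < #|Q| by rewrite cardQ.
split.
  move=> MC [F [[[confF _] forbF] _]].
  exact: (forbidden_configuration_not_MIPPC [ffun=> a] confF forbF MC).
move=> no_small C' _ C'_gt0 _; apply/negP => /eqP capSt; apply: no_small.
have [|F minF] := St_cap0_minimal_forbidden n_gt0 _ capSt.
  by rewrite -card_gt0.
by exists F; split; last apply: leq_config_size_minimal minF.1.
Qed.
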